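(* There exists a dynamical system $(X,T)$ which is totally transitive and transitive compact but not weakly mixing.
   Context: A dynamical system $(X,T)$: $X$ is a compact metric space with more than one point and without isolated points, $T:X\to X$ a continuous surjection. ''Opene'' means open and nonempty. $N_T(U,V)=\{n\in\mathbb{Z}_+:U\cap T^{-n}V\neq\varnothing\}$. $(X,T)$ is transitive if $N_T(U,V)\ne\varnothing$ for all opene $U,V$; totally transitive if $(X,T^k)$ is transitive for every $k\in\mathbb{N}$; weakly mixing if $(X\times X,T\times T)$ is transitive. $\mathcal{N}_T$ is the family of all subsets of $\mathbb{Z}_+$ containing some $N_T(U,V)$ with $U,V$ opene; $\omega_{\mathcal{N}_T}(x)=\bigcap_{F\in\mathcal{N}_T}\overline{\{T^ix:i\in F\}}$. $(X,T)$ is transitive compact if $\omega_{\mathcal{N}_T}(x)\neq\varnothing$ for all $x\in X$. *)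

From mathcomp Require Import all_boot all_order all_algebra.
From mathcomp Require Import all_classical all_reals all_analysis.
From mathcomp Require Export Rstruct Rstruct_topology.
Set Implicit Arguments. Unset Strict Implicit. Unset Printing Implicit Defensive.
Local Open Scope classical_set_scope.

Section Dyn.
Variable X : topologicalType.

Definition opene (U : set X) : Prop := open U /\ U !=set0.

Definition hitting_times (T : X -> X) (U V : set X) : set nat :=
  [set n | U `&` ((iter n T) @^-1` V) !=set0].

Definition transitive_sys (T : X -> X) : Prop :=
  forall U V, opene U -> opene V -> hitting_times T U V !=set0.

Definition totally_transitive (T : X -> X) : Prop :=
  forall k : nat, (0 < k)%N -> transitive_sys (iter k T).

Definition hitting_family (T : X -> X) (F : set nat) : Prop :=
  exists U V, [/\ opene U, opene V & hitting_times T U V `<=` F].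

Definition omega_family (T : X -> X) (x : X) : set X :=
  [set y | forall F, hitting_family T F ->
             closure [set iter i T x | i in F] y].

Definition transitive_compact (T : X -> X) : Prop :=
  forall x, omega_family T x !=set0.

Definition dynamical_system (T : X -> X) : Prop :=
  [/\ compact [set: X], hausdorff_space X,
      (exists x y : X, x <> y),
      (forall x : X, ~ open [set x]) &
      (continuous T /\ (forall y, exists x, T x = y))].
End Dyn.

Definition weakly_mixing (X : topologicalType) (T : X -> X) : Prop :=
  @transitive_sys (X * X)%type (fun p => (T p.1, T p.2)).

(* The example is a cone over the product of the circle with a sparse subshift.  A point is an
   angle t together with a 0-1 sequence z having at most sqrt m ones in every window of
   length m, embedded in (R^2)^N as n |-> z_n (cos t, sin t); all points with z = 0 collapse
   to the apex.  The map shifts z and rotates the angle by one radian.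
   Two prefixes of sparse sequences can be spliced at any distance n >= 5 L into a sparse
   sequence, and since pi is irrational, the multiples n of any k bringing the angle within d
   of a target form a syndetic set; hence every power of the map is transitive.
   Every sparse sequence has arbitrarily long zero blocks, during which the orbit stays near
   the apex, so the apex lies in every omega_{N_T}(x).  Finally the angle is a factor onto a
   rotation, which is never weakly mixing. *)

From mathcomp Require Import all_boot all_order all_algebra.
From mathcomp Require Import all_classical all_reals all_analysis.
From mathcomp Require Import Rstruct Rstruct_topology.
From mathcomp Require Import zify ring lra.
Set Implicit Arguments. Unset Strict Implicit. Unset Printing Implicit Defensive.
Import Order.TTheory GRing.Theory Num.Theory numFieldNormedType.Exports.

Section SparseSequences.
Implicit Types (z u v w : nat -> bool).

Definition window_count z (i m : nat) : nat := \sum_(i <= t < i + m) z t.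

Definition sparse z : Prop := forall i m, window_count z i m ^ 2 <= m.

Definition shift_seq z (k : nat) : nat -> bool := fun t => z (t + k).

Definition delay_seq (n : nat) w : nat -> bool := fun t => (n <= t) && w (t - n).

Definition trunc_seq (L : nat) u : nat -> bool := fun t => (t < L) && u t.

Definition splice u (L n : nat) v : nat -> bool :=
  fun t => trunc_seq L u t || delay_seq n (trunc_seq L v) t.

Definition pulse : nat -> bool := eq_op 0.

Lemma window_count0 z i : window_count z i 0 = 0.
Proof. by rewrite /window_count addn0 big_geq. Qed.

Lemma window_count1 z i : window_count z i 1 = z i.
Proof. by rewrite /window_count addn1 big_nat1. Qed.

Lemma window_countD z i a b :
  window_count z i (a + b) = window_count z i a + window_count z (i + a) b.
Proof. by rewrite /window_count addnA (@big_cat_nat _ _ _ (i + a)) //; lia. Qed.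

Lemma window_count_shift_seq z k i m :
  window_count (shift_seq z k) i m = window_count z (i + k) m.
Proof.
rewrite /window_count -{2}[i + k]add0n big_addn.
have -> : i + k + m - k = i + m by lia.
by apply: eq_big_nat => t _; rewrite /shift_seq addnC.
Qed.

Lemma window_count_le z i m : window_count z i m <= m.
Proof.
elim: m => [|m IHm]; first by rewrite window_count0.
by rewrite -addn1 window_countD window_count1; case: (z _); lia.
Qed.

Lemma window_count_mono u v i m :
  (forall t, i <= t < i + m -> u t -> v t) ->
  window_count u i m <= window_count v i m.
Proof.
move=> uv; rewrite /window_count big_nat_cond [leqRHS]big_nat_cond.
by apply: leq_sum => t /andP [/uv]; case: (u t) => // ->.
Qed.

Lemma window_count_eq0 z i m :
  (forall t, i <= t < i + m -> z t = false) -> window_count z i m = 0.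
Proof.
by move=> z0; rewrite /window_count big_nat_cond big1 // => t /andP [/z0 ->].
Qed.

Lemma window_count_orb u v i m :
  window_count (fun t => u t || v t) i m <= window_count u i m + window_count v i m.
Proof.
by rewrite /window_count -big_split; apply: leq_sum => t _; case: (u t); case: (v t).
Qed.

Lemma window_count_sub0 z i m : window_count z i m <= window_count z 0 (i + m).
Proof. by rewrite window_countD add0n leq_addl. Qed.

Lemma window_count_ext u v i m : u =1 v -> window_count u i m = window_count v i m.
Proof. by move=> uv; apply: eq_bigr => t _; rewrite uv. Qed.

Lemma window_count_prefix z i a b : a <= b -> window_count z i a <= window_count z i b.
Proof. by move=> ab; rewrite -(subnKC ab) window_countD leq_addr. Qed.

Lemma window_count_trunc_seq L u i m :
  window_count (trunc_seq L u) i m <= window_count u i m.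
Proof. by apply: window_count_mono => t _ /andP []. Qed.

Lemma window_count_trunc_seq_le L u i m :
  window_count (trunc_seq L u) i m <= window_count u 0 L.
Proof.
apply: leq_trans (window_count_sub0 _ _ _) _.
have [imL|Lim] := leqP (i + m) L.
  exact: leq_trans (window_count_trunc_seq _ _ _ _) (window_count_prefix _ _ imL).
rewrite -(subnKC (ltnW Lim)) window_countD add0n (@window_count_eq0 _ L) ?addn0.
  exact: window_count_trunc_seq.
by move=> t /andP [Lt _]; rewrite /trunc_seq ltnNge Lt.
Qed.

Lemma delay_seqK n w : shift_seq (delay_seq n w) n =1 w.
Proof. by move=> t; rewrite /shift_seq /delay_seq leq_addl addnK. Qed.

Lemma delay_seq_lt n w t : t < n -> delay_seq n w t = false.
Proof. by rewrite /delay_seq ltnNge => /negbTE ->. Qed.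

Lemma window_count_delay_seq n w i m :
  exists j, window_count (delay_seq n w) i m <= window_count w j m.
Proof.
have [ni|ltin] := leqP n i.
  exists (i - n); rewrite -{1}(subnK ni) -window_count_shift_seq.
  by rewrite (window_count_ext _ _ (delay_seqK n w)).
exists 0; apply: leq_trans (window_count_sub0 _ _ _) _.
have [imn|ltnim] := leqP (i + m) n.
  by rewrite window_count_eq0 // => t /andP [_ tn]; rewrite delay_seq_lt // (leq_trans tn imn).
rewrite -(subnKC (ltnW ltnim)) window_countD (@window_count_eq0 _ 0 n); last first.
  by move=> t /andP [_ tn]; rewrite delay_seq_lt.
rewrite -[n in window_count _ n]add0n -window_count_shift_seq.
rewrite (window_count_ext _ _ (delay_seqK n w)).
by apply: window_count_prefix; lia.
Qed.

Lemma window_count_gt0 z i m t : t < m -> z (i + t) -> 0 < window_count z i m.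
Proof.
move=> tm zt; rewrite -(subnKC tm) -[t.+1]addn1 !window_countD window_count1 zt /=; lia.
Qed.

Lemma window_count_blocks z M L K :
  (forall j, j < K -> 0 < window_count z (M + j * L) L) ->
  K <= window_count z M (K * L).
Proof.
elim: K => [//|K IHK] blocks_pos.
rewrite mulSnr window_countD -addn1 leq_add //; last exact: blocks_pos.
by apply: IHK => j jK; apply: blocks_pos; rewrite ltnS ltnW.
Qed.

Lemma sparse_le z j m a : sparse z -> a <= window_count z j m -> a ^ 2 <= m.
Proof. by move=> sz aj; apply: leq_trans (sz j m); rewrite leq_exp2r. Qed.

Lemma sparse_false : sparse (fun _ => false).
Proof. by move=> i m; rewrite window_count_eq0. Qed.

Lemma sparse_pulse : sparse pulse.
Proof.
move=> i m; have := window_count_le pulse i m.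
suff : window_count pulse i m <= 1 by case: (window_count pulse i m) => [|[|]].
case: i => [|i]; last by rewrite window_count_eq0 // => -[].
case: m => [|m]; first by rewrite window_count0.
by rewrite -add1n window_countD window_count1 window_count_eq0 // => -[].
Qed.

Lemma sparse_shift_seq z k : sparse z -> sparse (shift_seq z k).
Proof. by move=> sz i m; rewrite window_count_shift_seq. Qed.

Lemma sparse_delay_seq n w : sparse w -> sparse (delay_seq n w).
Proof. by move=> sw i m; have [j] := window_count_delay_seq n w i m; apply: sparse_le. Qed.

Lemma splice_l u L n v t : L <= n -> t < L -> splice u L n v t = u t.
Proof. by move=> Ln tL; rewrite /splice /trunc_seq tL delay_seq_lt ?orbF // (leq_trans tL). Qed.

Lemma splice_r u L n v t : L <= n -> t < L -> splice u L n v (t + n) = v t.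
Proof.
move=> Ln tL; rewrite /splice /trunc_seq ltnNge (leq_trans Ln (leq_addl _ _)) /=.
by rewrite /delay_seq leq_addl addnK tL.
Qed.

Lemma sparse_splice u v L n : sparse u -> sparse v -> 5 * L <= n -> sparse (splice u L n v).
Proof.
move=> su sv Ln i m.
set x := window_count (trunc_seq L u) i m.
have [j yj] := window_count_delay_seq n (trunc_seq L v) i m.
set y := window_count (delay_seq n (trunc_seq L v)) i m in yj *.
have xm : x ^ 2 <= m by apply: sparse_le su (window_count_trunc_seq _ _ _ _).
have xL : x ^ 2 <= L by apply: sparse_le su (window_count_trunc_seq_le _ _ _ _).
have ym : y ^ 2 <= m.
  by apply: sparse_le sv (leq_trans yj (window_count_trunc_seq _ _ _ _)).
have yL : y ^ 2 <= L.
  by apply: sparse_le sv (leq_trans yj (window_count_trunc_seq_le _ _ _ _)).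
apply: leq_trans (_ : (x + y) ^ 2 <= m).
  by rewrite leq_exp2r // window_count_orb.
have [Li|iL] := leqP L i.
  suff -> : x = 0 by [].
  by apply: window_count_eq0 => t /andP [it _]; rewrite /trunc_seq ltnNge (leq_trans Li it).
have [imn|nim] := leqP (i + m) n.
  suff -> : y = 0 by rewrite addn0.
  by apply: window_count_eq0 => t /andP [_ tn]; rewrite delay_seq_lt // (leq_trans tn imn).
(* the window meets both blocks, so [m > n - L >= 4 L >= 2 x ^ 2 + 2 y ^ 2 >= (x + y) ^ 2] *)
nia.
Qed.

Lemma sparse_zero_block z L M : sparse z ->
  exists2 s, M <= s & forall t, t < L -> z (s + t) = false.
Proof.
move=> sz.
have [/existsP [j /eqP block0] | ] :=
  boolP [exists j : 'I_L.+1, window_count z (M + j * L) L == 0].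
  exists (M + j * L); first exact: leq_addr.
  move=> t tL; apply/negbTE/negP => zt.
  by have := window_count_gt0 tL zt; rewrite block0.
rewrite negb_exists => /forallP blocks_pos.
have : L.+1 <= window_count z M (L.+1 * L).
  by apply: window_count_blocks => j jL; rewrite lt0n (blocks_pos (Ordinal jL)).
by move/(sparse_le sz); rewrite -mulnn leq_pmul2l // ltnn.
Qed.

End SparseSequences.

Local Open Scope ring_scope.

Section DiophantineApproximation.
Context {R : realType}.
Implicit Types (x t beta g c d : R).

Definition tau : R := pi *+ 2.

Definition near_tauZ d x : Prop := exists m : int, `|x - m%:~R * tau| < d.

Lemma tau_gt0 : 0 < tau.
Proof. by rewrite mulrn_wgt0 // pi_gt0. Qed.

Lemma natr_neq_int_tau (n : nat) (m : int) : (0 < n)%N -> n%:R != m%:~R * tau.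
Proof.
move=> n_gt0; apply/eqP => nE.
have m_gt0 : 0 < m.
  rewrite ltNge; apply/negP => m_le0.
  have : (n%:R : R) <= 0 by rewrite nE pmulr_lle0 ?tau_gt0 // lerz0.
  by rewrite leNgt ltr0n n_gt0.
apply: (@pi_irrationnal R); apply/rationalP.
exists (Posz n), (2 * `|m|)%N.
have -> : ((2 * `|m|)%N%:R : R) = 2 * m%:~R.
  by rewrite natrM -[m in RHS]gez0_abs ?ltW.
rewrite -[(Posz n)%:~R]/(n%:R : R) nE /tau -mulr_natr; field.
by rewrite intr_eq0 gt_eqF.
Qed.

Definition turns x : int := Num.floor (x / tau).

Definition frac_turn x : R := x / tau - (turns x)%:~R.

Lemma frac_turn_ge0 x : 0 <= frac_turn x.
Proof. by rewrite subr_ge0 floor_le. Qed.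

Lemma frac_turn_lt1 x : frac_turn x < 1.
Proof.
have := floor_lt_int (x / tau) (turns x + 1).
by rewrite ltzD1 lexx intrD ltrBlDl => /esym.
Qed.

Lemma turns_frac_turnE x : x = ((turns x)%:~R + frac_turn x) * tau.
Proof. by rewrite addrC subrK mulfVK // gt_eqF // tau_gt0. Qed.

Lemma near_tauZN d x : near_tauZ d x -> near_tauZ d (- x).
Proof. by case=> m xm; exists (- m); rewrite mulrNz mulNr -opprD normrN. Qed.

Lemma dirichlet_tau beta (N : nat) :
  exists2 q : nat, (0 < q <= N.+1)%N & near_tauZ (tau / N.+1%:R) (q%:R * beta).
Proof.
pose slot (j : 'I_N.+2) : nat := Num.truncn (N.+1%:R * frac_turn (j%:R * beta)).
have slot_lt j : (slot j < N.+1)%N.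
  rewrite truncn_lt_nat; last by rewrite mulr_ge0 // frac_turn_ge0.
  by rewrite gtr_pMr ?frac_turn_lt1 // ltr0n.
have /injectivePn [j1 [j2 j12 /(congr1 val) /= slot12]] :
    ~~ injectiveb (fun j => Ordinal (slot_lt j) : 'I_N.+1).
  by apply/negP => /injectiveP /leq_card; rewrite !card_ord ltnn.
wlog lt12 : j1 j2 j12 slot12 / (j1 < j2)%N.
  move=> W; case: (ltngtP j1 j2) => [|lt21|/val_inj eq12]; first exact: W.
  - by apply: (W j2 j1); rewrite // eq_sym.
  - by rewrite eq12 eqxx in j12.
exists (j2 - j1)%N; first by have := ltn_ord j2; lia.
exists (turns (j2%:R * beta) - turns (j1%:R * beta)).
set x1 := frac_turn (j1%:R * beta); set x2 := frac_turn (j2%:R * beta).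
have slot_itv j : (slot j)%:R <= N.+1%:R * frac_turn (j%:R * beta) < (slot j).+1%:R.
  by apply: truncn_itv; rewrite mulr_ge0 // frac_turn_ge0.
have /andP [x1l x1r] := slot_itv j1; have /andP [x2l x2r] := slot_itv j2.
rewrite -/x1 in x1l x1r; rewrite -/x2 -slot12 in x2l x2r.
have N_gt0 : (0 : R) < N.+1%:R by rewrite ltr0n.
have x12 : `|x2 - x1| < 1 / N.+1%:R.
  rewrite ltr_pdivlMr // mulrC -{1}(gtr0_norm N_gt0) -normrM ltr_norml mulrBr.
  by move: x1r x2r; rewrite -addn1 natrD => x1r x2r; apply/andP; split; lra.
have -> : (j2 - j1)%N%:R * beta - (turns (j2%:R * beta) - turns (j1%:R * beta))%:~R * tau
    = (x2 - x1) * tau.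
  rewrite natrB ?(ltnW lt12) // intrB /x1 /x2 /frac_turn.
  by field; rewrite gt_eqF // mulrn_wgt0 // pi_gt0.
by rewrite normrM (gtr0_norm tau_gt0) mulrC ltr_pM2l ?tau_gt0 // -div1r.
Qed.

Lemma near_tauZ_walk_pos g d : 0 < g < d ->
  exists J : nat, forall t, exists2 j : nat, (j <= J)%N & near_tauZ d (t + j%:R * g).
Proof.
move=> /andP [g_gt0 gd]; exists (Num.truncn (tau / g)).+1 => t.
set s := frac_turn t * tau.
have s_ge0 : 0 <= s by rewrite mulr_ge0 ?frac_turn_ge0 // ltW // tau_gt0.
have s_lt : s < tau by rewrite gtr_pMl ?frac_turn_lt1 // tau_gt0.
have steps_ge0 : 0 <= (tau - s) / g by rewrite divr_ge0 // ?subr_ge0 ltW.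
(* the least number of steps of length [g] carrying [s] past [tau] *)
exists (Num.truncn ((tau - s) / g)).+1.
  by rewrite ltnS le_truncn // ler_pM2r ?invr_gt0 // lerBlDr lerDl.
exists (turns t + 1).
have /andP [jl jr] := truncn_itv steps_ge0.
move: jl jr; set j := Num.truncn _; rewrite ler_pdivlMr // ltr_pdivrMr // -natr1 => jl jr.
rewrite intrD1 !mulrDl mul1r {1}(turns_frac_turnE t) mulrDl -/s ger0_norm; lra.
Qed.

Lemma near_tauZ_walk g d : 0 < `|g| < d ->
  exists J : nat, forall t, exists2 j : nat, (j <= J)%N & near_tauZ d (t + j%:R * g).
Proof.
case: (ltgtP g 0) => [g_lt0|g_gt0|->]; last by rewrite normr0 ltxx.
  rewrite ltr0_norm // => gd; have [J walkJ] := near_tauZ_walk_pos gd.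
  exists J => t; have [j jJ near_j] := walkJ (- t).
  by exists j => //; move/near_tauZN: near_j; rewrite opprD opprK mulrN opprK.
by rewrite gtr0_norm //; apply: near_tauZ_walk_pos.
Qed.

Lemma near_tauZ_syndetic (k : nat) d c : (0 < k)%N -> 0 < d ->
  exists G : nat, forall a : nat,
    exists2 j : nat, (a <= k * j < a + G)%N & near_tauZ d (c + (k * j)%:R).
Proof.
move=> k_gt0 d_gt0; set N := Num.truncn (tau / d).
have [q /andP [q_gt0 qN] [m0 near_qk]] := dirichlet_tau k%:R N.
have tauN_lt : tau / N.+1%:R < d.
  by rewrite ltr_pdivrMr ?ltr0n // mulrC -ltr_pdivrMr // truncnS_gt.
(* modulo [tau], rotating by [q k] radians is rotating by the small nonzero angle [g] *)
set g := q%:R * k%:R - m0%:~R * tau.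
have g_small : 0 < `|g| < d.
  rewrite (lt_trans near_qk tauN_lt) andbT normr_gt0 subr_eq0 -natrM.
  by rewrite natr_neq_int_tau // muln_gt0 q_gt0.
have [J walkJ] := near_tauZ_walk g_small.
exists (k + k * q * J + 1)%N => a.
set A := (a %/ k + 1)%N.
have [j jJ [m near_j]] := walkJ (c + (k * A)%N%:R).
exists (A + j * q)%N.
  have aA : (a < k * A)%N by rewrite /A mulnC addn1 ltn_ceil.
  have Aa : (k * A <= a + k)%N by rewrite /A mulnDr muln1 leq_add2r mulnC leq_divM.
  have jqJ : (k * q * j <= k * q * J)%N by rewrite leq_mul2l jJ orbT.
  apply/andP; split; rewrite mulnDr; lia.
exists (m + j%:Z * m0)%R.
suff -> : c + (k * (A + j * q))%N%:R - (m + j%:Z * m0)%:~R * tau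
    = c + (k * A)%N%:R + j%:R * g - m%:~R * tau by [].
by rewrite /g intrD intrM -[(Posz j)%:~R]/(j%:R : R) !(natrD, natrM); ring.
Qed.

End DiophantineApproximation.

Local Open Scope classical_set_scope.

Section ProductTopology.
Context {K : nat -> topologicalType}.

Lemma prod_topology_continuous {Y : topologicalType} (f : Y -> prod_topology K) :
  (forall i, continuous (fun y => f y i)) -> continuous f.
Proof.
move=> f_cont y; apply/cvg_sup => i.
exact: (@continuous_comp_initial _ Y (K i) (@proj _ K i) f (f_cont i) y).
Qed.

Definition cylinder_filter (p : prod_topology K) : set_system (prod_topology K) :=
  [set S | exists L (C : forall i, set (K i)), (forall i, nbhs (p i) (C i)) /\
    [set q | forall i, (i < L)%N -> C i (q i)] `<=` S].

Instance cylinder_filter_filter p : Filter (cylinder_filter p).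
Proof.
constructor.
- by exists 0%N, (fun _ => setT); split => // i; exact: filterT.
- move=> S1 S2 [L1 [C1 [nC1 S1C]]] [L2 [C2 [nC2 S2C]]].
  exists (maxn L1 L2), (fun i => C1 i `&` C2 i); split => [i|q Cq].
    exact: filterI.
  split; [apply: S1C | apply: S2C] => i iL; have [] := Cq i _ => //.
    by rewrite leq_max iL.
  by rewrite leq_max iL orbT.
- by move=> S1 S2 S12 [L [C [nC S1C]]]; exists L, C; split => // q /S1C /S12.
Qed.

Lemma cylinder_filter_cvg p : cylinder_filter p --> p.
Proof.
apply/cvg_sup => i A; rewrite nbhsE => -[_ [[B oB <-] Bp] BA].
exists i.+1, (dfwith (fun j => [set: K j]) i B); split.
  by move=> j; case: dfwithP => [|k _]; [exact: open_nbhs_nbhs | exact: filterT].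
by move=> q /(_ i (ltnSn i)); rewrite dfwithin => /BA.
Qed.

End ProductTopology.

Lemma nbhs_agree_below (z : cantor_space) (L : nat) :
  nbhs z [set z' : cantor_space | forall t, (t < L)%N -> z' t = z t].
Proof.
have : \forall z' \near z, forall t : 'I_L, z' (val t) = z (val t).
  apply: (@filter_forall _ _ (fun t (z' : cantor_space) => z' (val t) = z (val t))
    (nbhs z) _) => t.
  exact: (@proj_continuous nat (fun _ => bool) (val t) z _ (discrete_set1 (z t))).
by apply: filterS => z' agree t tL; apply: (agree (Ordinal tL)).
Qed.

Lemma sparse_closed : closed [set z : cantor_space | sparse z].
Proof.
move=> z clz i m; have [z' [sz' agree]] := clz _ (nbhs_agree_below z (i + m)).
suff -> : window_count z i m = window_count z' i m by exact: sz'.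
by apply: eq_big_nat => t /andP [_ tim]; rewrite agree.
Qed.

Section SetType.
Context {T : topologicalType} (A : set T).

Lemma set_val_continuous : continuous (set_val : set_type A -> T).
Proof. exact: initial_continuous. Qed.

Lemma set_type_hausdorff : hausdorff_space T -> hausdorff_space (set_type A).
Proof.
move=> T_haus p q cl; apply: val_inj; apply: T_haus => U V nU nV.
have [x [Ux Vx]] := cl _ _ (set_val_continuous nU) (set_val_continuous nV).
by exists (val x).
Qed.

Lemma set_type_compact : compact A -> compact [set: set_type A].
Proof.
move=> cA F PF _.
have FA : (set_val @ F) A by apply: nearW => x; exact: set_valP.
have [p [Ap clp]] := cA (set_val @ F) (fmap_proper_filter _ PF) FA.
exists (SigSub (mem_set Ap)); split => // U V FU.
rewrite nbhsE => -[_ [[C oC <-] Cp] CV].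
have FU' : (set_val @ F) (set_val @` U) by apply: (@filterS _ F _ U) => // x Ux; exists x.
have [_ [[u Uu <-] Cu]] := clp _ _ FU' (open_nbhs_nbhs (conj oC Cp)).
by exists u; split => //; apply: CV.
Qed.

End SetType.

Lemma periodicz {U V : zmodType} (f : U -> V) (T : U) :
  periodic f T -> forall (m : int) a, f (a + T *~ m) = f a.
Proof.
move=> fT [] n a; first exact: periodicn.
by rewrite NegzE mulrNz -[in RHS](subrK (T *+ n.+1) a) periodicn.
Qed.

Lemma open_setX {T1 T2 : topologicalType} (A : set T1) (B : set T2) :
  open A -> open B -> open (A `*` B).
Proof.
move=> oA oB; rewrite (_ : A `*` B = fst @^-1` A `&` snd @^-1` B) //.
by apply: openI; apply: open_comp => // -[x y] _; [exact: cvg_fst | exact: cvg_snd].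
Qed.

Lemma opene_setX {T1 T2 : topologicalType} (A : set T1) (B : set T2) :
  opene A -> opene B -> opene (A `*` B).
Proof. by move=> [oA [a Aa]] [oB [b Bb]]; split; [exact: open_setX | exists (a, b)]. Qed.

Lemma continuous_pair {T U V : topologicalType} (f : T -> U) (g : T -> V) :
  continuous f -> continuous g -> continuous (fun x => (f x, g x)).
Proof.
move=> cf cg x.
exact: (@cvg_pair _ _ _ (nbhs x) (nbhs (f x)) (nbhs (g x)) _ _ _ f g (cf x) (cg x)).
Qed.

Lemma iter_pair {A : Type} (f : A -> A) n (a b : A) :
  iter n (fun p => (f p.1, f p.2)) (a, b) = (iter n f a, iter n f b).
Proof. by elim: n => [|n IHn] //; rewrite !iterS IHn. Qed.

Section Circle.
Context {R : realType}.
Implicit Types (a t : R) (v : R * R).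

Definition cis t : R * R := (cos t, sin t).

Definition rotate a v : R * R := (v.1 * cos a - v.2 * sin a, v.1 * sin a + v.2 * cos a).

Lemma cis_continuous : continuous cis.
Proof. by apply: continuous_pair => t; [exact: continuous_cos | exact: continuous_sin]. Qed.

Lemma cis_neq0 t : cis t != 0.
Proof. by apply/negP => /eqP [c0 s0]; have := cos2Dsin2 t; rewrite c0 s0; lra. Qed.

Lemma cis_tauZ t (m : int) : cis (t + m%:~R * tau) = cis t.
Proof. by rewrite /cis mulrzl !periodicz //; [exact: sinD2pi | exact: cosD2pi]. Qed.

Lemma rotate_cis a t : rotate a (cis t) = cis (t + a).
Proof. by rewrite /rotate /cis /= trigo.cosD trigo.sinD; congr pair; ring. Qed.

Lemma rotate0 a : rotate a 0 = 0.
Proof. by rewrite /rotate /=; congr pair; ring. Qed.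

Lemma rotate_continuous a : continuous (rotate a).
Proof.
by apply: continuous_pair => v; [apply: cvgB | apply: cvgD];
  apply: cvgM; (exact: cvg_cst || exact: cvg_fst || exact: cvg_snd).
Qed.

Lemma cos_sub_gt0 a b : 9/10 < cos a -> 9/10 < cos b -> 0 < cos (b - a).
Proof.
move=> ca cb; rewrite trigo.cosB.
have := cos2Dsin2 a; have := cos2Dsin2 b; have := sqr_ge0 (sin a + sin b).
rewrite !expr2 => s2 n2a n2b; nra.
Qed.

Lemma cos_sub_lt0 a b : 9/10 < cos a -> cos b < - (9/10) -> cos (b - a) < 0.
Proof.
move=> ca cb; have := @cos_sub_gt0 a (b + pi) ca.
by rewrite cosDpi addrAC cosDpi oppr_gt0; apply; lra.
Qed.

End Circle.

Section Cone.
Context {R : realType}.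
Local Notation ambient := (prod_topology (fun _ : nat => (R * R)%type)).
Implicit Types (t : R) (z : nat -> bool).

Definition cone t z : ambient := fun n => if z n then cis t else 0.

Definition cone_set : set ambient := [set p | exists t z, sparse z /\ p = cone t z].

Definition cone_space := set_type cone_set.

Definition shift_rotate (p : ambient) : ambient := fun n => rotate 1 (p n.+1).

Lemma cone_tauZ t (m : int) z : cone (t + m%:~R * tau) z = cone t z.
Proof. by apply: funext => n; rewrite /cone cis_tauZ. Qed.

Lemma cone_inj t t' z z' : cone t z = cone t' z' -> z = z'.
Proof.
move=> tz; apply: funext => n; have := congr1 (fun p : ambient => p n) tz.
rewrite /cone; case: (z n); case: (z' n) => // c0; [move: (cis_neq0 t) | move: (cis_neq0 t')].
  by rewrite c0 eqxx.
by rewrite -c0 eqxx.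
Qed.

Lemma shift_rotate_cone t z : shift_rotate (cone t z) = cone (t + 1) (shift_seq z 1).
Proof.
apply: funext => n; rewrite /shift_rotate /cone /shift_seq addn1.
by case: (z n.+1); [exact: rotate_cis | exact: rotate0].
Qed.

Lemma iter_shift_rotate_cone n t z :
  iter n shift_rotate (cone t z) = cone (t + n%:R) (shift_seq z n).
Proof.
elim: n => [|n IHn].
  by rewrite addr0; congr cone; apply: funext => i; rewrite /shift_seq addn0.
rewrite iterS IHn shift_rotate_cone -addrA -natr1; congr cone.
by apply: funext => i; rewrite /shift_seq addn1 addnS.
Qed.

Lemma cone_setP t z : sparse z -> cone_set (cone t z).
Proof. by move=> sz; exists t, z. Qed.

Definition to_cone t z (sz : sparse z) : cone_space := SigSub (mem_set (cone_setP t sz)).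

Lemma set_val_to_cone t z (sz : sparse z) : set_val (to_cone t sz) = cone t z.
Proof. by []. Qed.

Lemma cone_spaceP (x : cone_space) : exists t z, sparse z /\ set_val x = cone t z.
Proof. by have [t [z [sz xE]]] := set_valP x; exists t, z. Qed.

Lemma cone_set_shift_rotate (x : cone_space) : cone_set (shift_rotate (set_val x)).
Proof.
have [t [z [sz ->]]] := cone_spaceP x.
by rewrite shift_rotate_cone; apply/cone_setP/sparse_shift_seq.
Qed.

Definition cone_map (x : cone_space) : cone_space :=
  SigSub (mem_set (cone_set_shift_rotate x)).

Lemma set_val_cone_map (x : cone_space) : set_val (cone_map x) = shift_rotate (set_val x).
Proof. by []. Qed.

Lemma iter_cone_map n (x : cone_space) t z :
  set_val x = cone t z -> set_val (iter n cone_map x) = cone (t + n%:R) (shift_seq z n).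
Proof.
move=> xE; rewrite -iter_shift_rotate_cone -xE.
by elim: n => [|n IHn] //; rewrite !iterS -IHn.
Qed.

Lemma cone_coord_continuous z n : continuous (fun t => cone t z n).
Proof. by rewrite /cone; case: (z n); [exact: cis_continuous | exact: cst_continuous]. Qed.

Lemma nbhs_cone t1 z1 (C : set ambient) : nbhs (cone t1 z1) C ->
  exists (L : nat) (d : R), 0 < d /\ forall t z, `|t1 - t| < d ->
    (forall i, (i < L)%N -> z i = z1 i) -> C (cone t z).
Proof.
move=> /cylinder_filter_cvg [L [D [nD DC]]].
have : \forall t \near t1, forall i : 'I_L, D i (cone t z1 i).
  apply: (@filter_forall _ _ (fun (i : 'I_L) t => D i (cone t z1 i)) (nbhs t1) _) => i.
  exact: cone_coord_continuous (nD i).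
move=> /nbhs_ballP [d /= d_gt0 near_d]; exists L, d; split => // t z t1t agree.
by apply: DC => i iL; rewrite /cone agree //; exact: (near_d t t1t (Ordinal iL)).
Qed.

Lemma nbhs_apex (C : set ambient) : nbhs (cone 0 (fun _ => false)) C ->
  exists L : nat, forall t z, (forall i, (i < L)%N -> z i = false) -> C (cone t z).
Proof.
move=> /cylinder_filter_cvg [L [D [nD DC]]]; exists L => t z z0.
by apply: DC => i iL; rewrite /cone z0 //; exact: nbhs_singleton (nD i).
Qed.

Lemma opene_cone_box (U : set cone_space) : opene U -> exists t1 z1 (L : nat) (d : R),
  [/\ sparse z1, 0 < d & forall (y : cone_space) t z, set_val y = cone t z ->
    `|t1 - t| < d -> (forall i, (i < L)%N -> z i = z1 i) -> U y].
Proof.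
move=> [[C oC <-] [x /= Cx]]; have [t1 [z1 [sz1 xE]]] := cone_spaceP x.
have {}Cx : C (cone t1 z1) by rewrite -xE.
have [L [d [d_gt0 box]]] := nbhs_cone (open_nbhs_nbhs (conj oC Cx)).
by exists t1, z1, L, d; split => // y t z yE t1t agree; rewrite /= yE; apply: box.
Qed.

(* splice the prefixes of the two boxes at distance [n]; the angles then match up to [d] *)
Lemma opene_hit (U V : set cone_space) : opene U -> opene V ->
  exists (L : nat) (d c : R), 0 < d /\ forall n : nat, (5 * L <= n)%N ->
    near_tauZ d (c + n%:R) -> exists x, U x /\ V (iter n cone_map x).
Proof.
move=> oU oV.
have [t1 [z1 [L1 [d1 [sz1 d1_gt0 boxU]]]]] := opene_cone_box oU.
have [t2 [z2 [L2 [d2 [sz2 d2_gt0 boxV]]]]] := opene_cone_box oV.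
set L := maxn L1 L2; exists L, (Num.min d1 d2), (t1 - t2).
split=> [|n Ln [m near_m]]; first by rewrite lt_min d1_gt0 d2_gt0.
have Ln' : (L <= n)%N by lia.
have sz := sparse_splice sz1 sz2 Ln; exists (to_cone t1 sz); split.
  apply: (boxU _ t1 (splice z1 L n z2)) => //; first by rewrite subrr normr0.
  by move=> i iL1; rewrite splice_l // (leq_trans iL1) ?leq_maxl.
apply: (boxV _ (t1 + n%:R - m%:~R * tau) (shift_seq (splice z1 L n z2) n)).
- by rewrite (iter_cone_map n (set_val_to_cone t1 sz)) -[in RHS](cone_tauZ _ m) subrK.
- rewrite (_ : t2 - _ = - (t1 - t2 + n%:R - m%:~R * tau)) ?normrN; last by ring.
  by apply: lt_le_trans near_m _; rewrite ge_min lexx orbT.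
- by move=> i iL2; rewrite /shift_seq splice_r // (leq_trans iL2) ?leq_maxr.
Qed.

Lemma cone_map_totally_transitive : totally_transitive cone_map.
Proof.
move=> k k_gt0 U V oU oV.
have [L [d [c [d_gt0 hitUV]]]] := opene_hit oU oV.
have [G syndetic] := near_tauZ_syndetic c k_gt0 d_gt0.
have [j /andP [Lkj _] near_j] := syndetic (5 * L)%N.
have [x [Ux Vx]] := hitUV _ Lkj near_j.
by exists j, x; split => //; rewrite /preimage /= -iterM mulnC.
Qed.

Definition apex : cone_space := to_cone 0 sparse_false.

Lemma cone_map_transitive_compact : transitive_compact cone_map.
Proof.
move=> x; exists apex => F [U [V [oU oV UVF]]] W.
rewrite nbhsE => -[_ [[C oC <-] Capex] CW].
have [L0 near_apex] := nbhs_apex (open_nbhs_nbhs (conj oC Capex)).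
have [L [d [c [d_gt0 hitUV]]]] := opene_hit oU oV.
have [G syndetic] := near_tauZ_syndetic c (ltn0Sn 0) d_gt0.
have [t [z [sz xE]]] := cone_spaceP x.
have [s Ls zero_block] := sparse_zero_block (L0 + G) (5 * L) sz.
have [j /andP [sj jsG] near_j] := syndetic s; rewrite mul1n in sj jsG near_j.
have Fj : F j.
  by apply: UVF; have [y [Uy Vy]] := hitUV j (leq_trans Ls sj) near_j; exists y.
exists (iter j cone_map x); split; first by exists j.
apply: CW; rewrite /= (iter_cone_map _ xE); apply: near_apex => i iL0.
by rewrite /shift_seq -(subnKC sj) addnC -addnA zero_block //; lia.
Qed.

Definition abscissa (x : cone_space) : R := (set_val x 0%N).1.

Lemma abscissa_continuous : continuous abscissa.
Proof.
move=> x; apply: (@continuous_comp _ _ _ set_val (fun p : ambient => (p 0%N).1)).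
  exact: set_val_continuous.
apply: (@continuous_comp _ _ _ (fun p : ambient => p 0%N) fst); first exact: proj_continuous.
exact: cvg_fst.
Qed.

Lemma abscissa_cone (x : cone_space) t z :
  set_val x = cone t z -> abscissa x = if z 0%N then cos t else 0.
Proof. by rewrite /abscissa => ->; rewrite /cone; case: (z 0%N). Qed.

Lemma opene_abscissa_gt : opene (abscissa @^-1` [set r | 9/10 < r]).
Proof.
split; first by apply: open_comp => [x _|]; [exact: abscissa_continuous | exact: open_gt].
exists (to_cone 0 sparse_pulse).
by rewrite /preimage /= (abscissa_cone (set_val_to_cone _ _)) /= cos0; lra.
Qed.

Lemma opene_abscissa_lt : opene (abscissa @^-1` [set r | r < - (9/10)]).
Proof.
split; first by apply: open_comp => [x _|]; [exact: abscissa_continuous | exact: open_lt].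
exists (to_cone pi sparse_pulse).
by rewrite /preimage /= (abscissa_cone (set_val_to_cone _ _)) /= cospi; lra.
Qed.

Lemma cos_gt_abscissa (x : cone_space) t z :
  set_val x = cone t z -> 9/10 < abscissa x -> 9/10 < cos t.
Proof. by move=> /abscissa_cone ->; case: (z 0%N) => //; lra. Qed.

Lemma cos_lt_abscissa (x : cone_space) t z :
  set_val x = cone t z -> abscissa x < - (9/10) -> cos t < - (9/10).
Proof. by move=> /abscissa_cone ->; case: (z 0%N) => //; lra. Qed.

(* the angle is a factor onto the rotation by [1]: [cos n] would be both positive and negative *)
Lemma cone_map_not_weakly_mixing : ~ weakly_mixing cone_map.
Proof.
move=> /(_ _ _ (opene_setX opene_abscissa_gt opene_abscissa_gt)
  (opene_setX opene_abscissa_gt opene_abscissa_lt)).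
move=> [n [[a b] [[/= a_right b_right]]]].
rewrite /preimage /= iter_pair => -[/= na_right nb_left].
have [t [z [_ aE]]] := cone_spaceP a; have [t' [z' [_ bE]]] := cone_spaceP b.
have := cos_sub_gt0 (cos_gt_abscissa aE a_right)
  (cos_gt_abscissa (iter_cone_map n aE) na_right).
have := cos_sub_lt0 (cos_gt_abscissa bE b_right)
  (cos_lt_abscissa (iter_cone_map n bE) nb_left).
by rewrite ![_ + n%:R]addrC !addrK; lra.
Qed.

Lemma cone_uncurry_continuous : continuous (fun w : R * cantor_space => cone w.1 w.2).
Proof.
apply: prod_topology_continuous => n w N; rewrite /cone => Nw.
have z_near : \forall w' \near w, w'.2 n = w.2 n.
  have zn_near : nbhs w.2 [set z' : cantor_space | z' n = w.2 n].
    exact: (@proj_continuous nat (fun _ => bool) n w.2 _ (discrete_set1 (w.2 n))).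
  exact: (@cvg_snd _ _ (nbhs w.1) (nbhs w.2) _ _ zn_near).
case: ifP Nw => wn Nw.
  have t_near : \forall w' \near w, N (cis w'.1).
    have := @continuous_comp _ _ _ (fun w' : (R * cantor_space)%type => w'.1) cis w
      (@cvg_fst _ _ (nbhs w.1) (nbhs w.2) _) (@cis_continuous R w.1) N Nw.
    exact.
  by apply: filterS (filterI z_near t_near) => w' [/= ->]; rewrite wn.
by apply: filterS z_near => w' /= ->; rewrite wn; exact: nbhs_singleton Nw.
Qed.

Lemma cone_setE : cone_set =
  (fun w : R * cantor_space => cone w.1 w.2) @` (`[0, tau] `*` [set z : cantor_space | sparse z]).
Proof.
apply/seteqP; split => [_ [t [z [sz ->]]]|_ [[t z] [_ sz] <-]]; last by exists t, z.
exists (frac_turn t * tau, z) => /=.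
  split => //=; rewrite in_itv /= mulr_ge0 ?frac_turn_ge0 ?ltW ?tau_gt0 //=.
  by rewrite gtr_pMl ?frac_turn_lt1 ?tau_gt0.
by rewrite -[LHS](cone_tauZ _ (turns t)) -mulrDl addrC -turns_frac_turnE.
Qed.

Lemma cone_space_compact : compact [set: cone_space].
Proof.
apply: set_type_compact; rewrite cone_setE; apply: continuous_compact.
  by apply: continuous_subspaceT; exact: cone_uncurry_continuous.
apply: compact_setX; first exact: segment_compact.
exact: subclosed_compact sparse_closed cantor_space_compact (subsetT _).
Qed.

Lemma cone_space_hausdorff : hausdorff_space cone_space.
Proof. by apply/set_type_hausdorff/hausdorff_product => _; exact: norm_hausdorff. Qed.

Lemma apex_neq_pulse : apex != to_cone 0 sparse_pulse.
Proof. by apply/eqP => /(congr1 set_val) /cone_inj /(congr1 (fun z => z 0%N)). Qed.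

Lemma cone_space_no_isolated (x : cone_space) : ~ open [set x].
Proof.
move=> [C oC Cx1]; have [t [z [sz xE]]] := cone_spaceP x.
have Cx : C (cone t z) by rewrite -xE; have : [set x] x by []; rewrite -Cx1.
have [L [d [d_gt0 box]]] := nbhs_cone (open_nbhs_nbhs (conj oC Cx)).
have Ln : (L.+1 <= 5 * L.+1)%N by rewrite leq_pmull.
have splice_eq w : sparse w -> splice z L.+1 (5 * L.+1) w = z.
  move=> sw; have sg := sparse_splice sz sw (leqnn (5 * L.+1)).
  have : (set_val @^-1` C) (to_cone t sg).
    rewrite /preimage /=; apply: box; first by rewrite subrr normr0.
    by move=> i iL; rewrite splice_l // ltnW.
  by rewrite Cx1 => /(congr1 set_val); rewrite set_val_to_cone xE => /cone_inj.
have := congr1 (fun w => w (0 + 5 * L.+1)%N) (splice_eq _ sparse_false).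
have := congr1 (fun w => w (0 + 5 * L.+1)%N) (splice_eq _ sparse_pulse).
by rewrite /= !splice_r // => <-.
Qed.

Lemma shift_rotate_continuous : continuous shift_rotate.
Proof.
apply: prod_topology_continuous => n p.
exact: (@continuous_comp _ _ _ (fun q : ambient => q n.+1) (rotate 1) p
  (@proj_continuous _ _ n.+1 p) (@rotate_continuous R 1 (p n.+1))).
Qed.

Lemma cone_map_continuous : continuous cone_map.
Proof.
apply: (@continuous_comp_initial _ _ _ set_val cone_map) => x.
have -> : set_val \o cone_map = shift_rotate \o set_val by [].
by apply: continuous_comp; [exact: set_val_continuous | exact: shift_rotate_continuous].
Qed.

Lemma cone_map_surjective (y : cone_space) : exists x, cone_map x = y.
Proof.
have [t [z [sz yE]]] := cone_spaceP y.
exists (to_cone (t - 1) (sparse_delay_seq 1 sz)); apply: val_inj; rewrite -set_valE.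
rewrite set_val_cone_map set_val_to_cone shift_rotate_cone subrK yE.
by congr cone; apply: funext; exact: delay_seqK.
Qed.

Lemma cone_dynamical_system : dynamical_system cone_map.
Proof.
split; [exact: cone_space_compact | exact: cone_space_hausdorff | | |].
- by exists apex, (to_cone 0 sparse_pulse); apply/eqP/apex_neq_pulse.
- exact: cone_space_no_isolated.
- by split; [exact: cone_map_continuous | exact: cone_map_surjective].
Qed.

End Cone.

Theorem theorem6p1 :
  exists (X : pseudoMetricType Rdefinitions.R) (T : X -> X),
    [/\ dynamical_system T, totally_transitive T, transitive_compact T
      & ~ weakly_mixing T].
Proof.
exists (@cone_space Rdefinitions.R), cone_map; split.
- exact: cone_dynamical_system.
- exact: cone_map_totally_transitive.
- exact: cone_map_transitive_compact.
- exact: cone_map_not_weakly_mixing.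
Qed.
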